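(* Let $(A,v)$, $(B,w)$ be valued abelian groups, $f:A\to B$ a group homomorphism, and $S\subseteq A$ a subset satisfying conditions (a), (b), (c) below, with $\varphi:v(S)\to w(B)$ the map from (a). Assume $(A,v)$ is spherically complete. Then for every $a\in A$ and every $\alpha\in v(S)$, $$f(B_\alpha(a))=B_{\varphi(\alpha)}(f(a)),$$ where the right-hand side is the ball in $(B,w)$. Conditions: (a) the assignment $vs\mapsto wf(s)$ ($s\in S$) defines a map $\varphi:v(S)\to w(B)$ (i.e. $vs=vs'\Rightarrow wf(s)=wf(s')$) which is order preserving ($vs<vs'\Rightarrow wf(s)<wf(s')$); (b) for all $a\in A$, $s\in S$: $va\ge vs\Rightarrow wf(a)\ge wf(s)$; (c) for every $b\in B\setminus\{0\}$ there is $s\in S$ with $w(b-f(s))>wb$.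
   Context: A valued abelian group $(A,v)$ is an abelian group $A$ with a map $v:A\to \Gamma\cup\{\infty\}$, $a\mapsto va$, onto a totally ordered set with largest element $\infty$, such that $va=\infty\iff a=0$ and $v(a-a')\ge\min\{va,va'\}$ for all $a,a'\in A$. For $X\subseteq A$ write $v(X)=\{vx\mid x\in X\}$. For $a\in A$ and $\alpha\in v(A)$ the ball is $B_\alpha(a)=\{a'\in A\mid v(a-a')\ge\alpha\}$. A nest of balls is a set of balls totally ordered by inclusion; $(A,v)$ is spherically complete if every nest of balls has nonempty intersection. *)

From HB Require Import structures.
From mathcomp Require Import all_boot all_order all_algebra.
Set Implicit Arguments. Unset Strict Implicit. Unset Printing Implicit Defensive.
Import Order.TTheory GRing.Theory.
Local Open Scope order_scope.

(* A valued abelian group (A, v): v : A -> G onto a totally ordered set G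
   (playing the role of Gamma \cup {oo}) with largest element inf (= oo),
   such that v a = oo <-> a = 0 and v (a - a') >= min (v a) (v a'). *)
Definition valued (A : zmodType) (d : Order.disp_t) (G : orderType d)
    (inf : G) (v : A -> G) : Prop :=
  [/\ (forall g : G, g <= inf),
      (forall a : A, v a = inf <-> a = 0%R),
      (forall a a' : A, Order.min (v a) (v a') <= v (a - a')%R)
    & (forall g : G, exists a : A, v a = g)].

Definition ball (A : zmodType) (d : Order.disp_t) (G : orderType d)
    (v : A -> G) (alpha : G) (a : A) : A -> Prop :=
  fun a' => alpha <= v (a - a')%R.

Definition is_ball (A : zmodType) (d : Order.disp_t) (G : orderType d)
    (v : A -> G) (X : A -> Prop) : Prop :=
  exists (a : A) (alpha : G), (exists x : A, v x = alpha) /\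
    (forall y : A, X y <-> ball v alpha a y).

Definition spherically_complete (A : zmodType) (d : Order.disp_t)
    (G : orderType d) (v : A -> G) : Prop :=
  forall N : (A -> Prop) -> Prop,
    (forall X, N X -> is_ball v X) ->
    (forall X Y, N X -> N Y ->
       (forall y, X y -> Y y) \/ (forall y, Y y -> X y)) ->
    exists a : A, forall X, N X -> X a.

From HB Require Import structures.
From mathcomp Require Import all_boot all_order all_algebra.
From mathcomp Require Import classical_sets.
Set Implicit Arguments. Unset Strict Implicit. Unset Printing Implicit Defensive.
Import Order.TTheory GRing.Theory.
Local Open Scope ring_scope.
Local Open Scope order_scope.
Local Open Scope classical_set_scope.

(* The inclusion f(B_alpha(a)) <= B_phi(alpha)(f a) is condition (b). For the
   converse, fix s0 in S and b with w b >= phi(v s0), and look at the balls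
   B_{v t}(x) inside B_{v s0}(0), with t in S, whose centre approximates b to
   order phi(v t), i.e. w (b - f x) >= w (f t). Take a maximal nest of such
   balls (Zorn) and a point z of its intersection (spherical completeness).
   If f z <> b, condition (c) applied twice gives t, u in S with v t < v u and
   a ball B_{v u}(z + t) of the family which lies inside every ball of the nest
   but misses z, contradicting maximality. Hence f z = b. *)

Lemma Zorn_nest (T : Type) (P : set (set T)) :
  exists N, (N `<=` P /\ total_on N subset) /\
    forall M, N `<` M -> ~ (M `<=` P /\ total_on M subset).
Proof.
apply: Zorn_bigcup => F FP Ftot; split.
  by move=> X [Y FY YX]; exact: (FP Y FY).1 X YX.
move=> X Y [X' FX' XX'] [Y' FY' YY']; case: (Ftot _ _ FX' FY') => sub.
  exact: (FP Y' FY').2 X Y (sub _ XX') YY'.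
exact: (FP X' FX').2 X Y XX' (sub _ YY').
Qed.

Lemma total_onU1 (T : Type) (N : set (set T)) (X : set T) :
  total_on N subset -> (forall Y, N Y -> X `<=` Y \/ Y `<=` X) ->
  total_on (N `|` [set X]) subset.
Proof.
move=> Ntot XN Y Z [NY|->] [NZ|->]; [exact: Ntot|..|by left].
- by case: (XN Y NY); [right|left].
- exact: XN.
Qed.

Section ValuedGroup.
Variables (A : zmodType) (d : Order.disp_t) (G : orderType d) (inf : G) (v : A -> G).
Hypothesis hv : valued inf v.

Lemma valued0 : v 0 = inf.
Proof. by case: hv => _ v_eq_inf _ _; exact/v_eq_inf. Qed.

Lemma valuedN a : v (- a) = v a.
Proof.
case: hv => top _ vB _.
have le_vN x : v x <= v (- x).
  by have := vB 0 x; rewrite sub0r valued0 (min_idPr (top _)).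
by apply/le_anti; rewrite le_vN andbT; have := le_vN (- a); rewrite opprK.
Qed.

Lemma valuedB_ge g a a' : g <= v a -> g <= v a' -> g <= v (a - a').
Proof.
case: hv => _ _ vB _ ga ga'; apply: le_trans (vB a a').
by rewrite le_min ga ga'.
Qed.

Lemma valuedD_ge g a a' : g <= v a -> g <= v a' -> g <= v (a + a').
Proof. by move=> ga ga'; rewrite -[a']opprK valuedB_ge // valuedN. Qed.

Lemma valued_eq_of_ltB c t : v c < v (c - t) -> v t = v c.
Proof.
move=> lt_c; have le_ct : v c <= v t.
  by rewrite -[t](subKr c) valuedB_ge // ltW.
apply/le_anti; rewrite le_ct andbT leNgt; apply/negP => lt_tc.
have : Order.min (v (c - t)) (v t) <= v c.
  by case: hv => _ _ vB _; have := vB (c - t) (- t); rewrite opprK subrK valuedN.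
by rewrite ge_min !leNgt lt_c lt_tc.
Qed.

Lemma ball0 alpha x : ball v alpha 0 x = (alpha <= v x).
Proof. by rewrite /ball sub0r valuedN. Qed.

Lemma ball_sub alpha beta x c :
  alpha <= beta -> ball v alpha x c -> ball v beta c `<=` ball v alpha x.
Proof.
rewrite /ball => le_ab xc y cy.
by rewrite -[x - y](subrKA c) valuedD_ge // (le_trans le_ab).
Qed.

End ValuedGroup.

Section BallImage.
Variables (A B : zmodType) (d1 d2 : Order.disp_t) (G1 : orderType d1) (G2 : orderType d2).
Variables (inf1 : G1) (inf2 : G2) (v : A -> G1) (w : B -> G2).
Variables (f : {additive A -> B}) (S : A -> Prop).
Hypotheses (hv : valued inf1 v) (hw : valued inf2 w).
Hypothesis phi_eq : forall s s', S s -> S s' -> v s = v s' -> w (f s) = w (f s').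
Hypothesis phi_lt : forall s s', S s -> S s' -> v s < v s' -> w (f s) < w (f s').
Hypothesis phi_ge : forall a s, S s -> v s <= v a -> w (f s) <= w (f a).
Hypothesis approx : forall b, b != 0 -> exists s, S s /\ w b < w (b - f s).

Lemma image_ball_sub a s :
  S s -> f @` ball v (v s) a `<=` ball w (w (f s)) (f a).
Proof. by move=> Ss _ [x ax <-]; rewrite /ball -raddfB phi_ge. Qed.

Lemma le_of_phi_le t u : S t -> S u -> w (f t) <= w (f u) -> v t <= v u.
Proof.
move=> St Su le_tu; rewrite leNgt; apply/negP => /(phi_lt Su St).
by rewrite ltNge le_tu.
Qed.

Lemma lt_of_phi_lt t u : S t -> S u -> w (f t) < w (f u) -> v t < v u.
Proof.
move=> St Su lt_tu; rewrite ltNge le_eqVlt; apply/negP => /orP[/eqP e|l].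
  by move: lt_tu; rewrite (phi_eq Su St e) ltxx.
by have := phi_lt Su St l; rewrite ltNge (ltW lt_tu).
Qed.

Lemma exists_approx z b : f z != b ->
  exists t, [/\ S t, w (f t) = w (b - f z) & w (b - f z) < w (b - f (z + t))].
Proof.
rewrite eq_sym -subr_eq0 => nz; have [t [St lt_t]] := approx nz.
exists t; split=> //; first exact: (valued_eq_of_ltB hw lt_t).
by rewrite raddfD opprD addrA.
Qed.

Variables (s0 : A) (b : B).
Hypotheses (Ss0 : S s0) (le_s0b : w (f s0) <= w b).

Definition approx_center x t :=
  [/\ S t, v s0 <= v t, v s0 <= v x & w (f t) <= w (b - f x)].

Definition approx_ball (X : set A) :=
  exists x t, approx_center x t /\ X = ball v (v t) x.

Lemma approx_center_root : approx_center 0 s0.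
Proof. by split; rewrite // ?raddf0 ?oppr0 ?addr0 // (valued0 hv); case: hv. Qed.

Lemma approx_ball_is_ball X : approx_ball X -> is_ball v X.
Proof. by case=> x [t [_ ->]]; exists x, (v t); split=> //; exists t. Qed.

Lemma approx_ball_sub_root X : approx_ball X -> X `<=` ball v (v s0) 0.
Proof.
by case=> x [t [[_ s0t s0x _] ->]]; apply: (ball_sub hv s0t); rewrite (ball0 hv).
Qed.

Lemma approx_center_le z t x r :
  S t -> w (f t) = w (b - f z) -> approx_center x r -> ball v (v r) x z ->
  v r <= v t.
Proof.
move=> St wt [Sr _ _ rx] xz; apply: le_of_phi_le => //; rewrite wt.
by rewrite -[b - f z](subrKA (f x)) -raddfB (valuedD_ge hw) // phi_ge.
Qed.

Lemma approx_ball_refine z : v s0 <= v z -> f z != b ->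
  (exists x, v s0 <= v x /\ f x = b) \/
  exists2 X, approx_ball X &
    ~ X z /\ forall Y, approx_ball Y -> Y z -> X `<=` Y.
Proof.
move=> s0z fzb; have [t [St wt lt_zt]] := exists_approx fzb.
have s0t : v s0 <= v t.
  by apply: approx_center_le St wt approx_center_root _; rewrite (ball0 hv).
have s0zt : v s0 <= v (z + t) by exact: (valuedD_ge hv).
have [fzt|fztb] := eqVneq (f (z + t)) b; first by left; exists (z + t).
have [u [Su wu _]] := exists_approx fztb.
have lt_tu : v t < v u by apply: lt_of_phi_lt; rewrite // wt wu.
right; exists (ball v (v u) (z + t)).
  by exists (z + t), u; split=> //; split; rewrite ?wu // (le_trans s0t (ltW lt_tu)).
split; first by rewrite /ball addrC addKr leNgt lt_tu.
move=> _ [x [r [xr ->]]] xz; have le_rt := approx_center_le St wt xr xz.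
apply: (ball_sub hv (le_trans le_rt (ltW lt_tu))).
by rewrite /ball opprD addrA (valuedB_ge hv).
Qed.

Hypothesis hsc : spherically_complete v.

Lemma exists_preimage_in_ball : exists x, v s0 <= v x /\ f x = b.
Proof.
have [N [[Napprox Ntot] Nmax]] := Zorn_nest approx_ball.
pose root := ball v (v s0) 0.
have [z zN] : exists z, forall X, (N `|` [set root]) X -> X z.
  apply: hsc => [X [/Napprox|->]|]; first exact: approx_ball_is_ball.
    by exists 0, (v s0); split=> //; exists s0.
  by apply: total_onU1 => // Y /Napprox/approx_ball_sub_root; right.
have s0z : v s0 <= v z by rewrite -(ball0 hv); apply: zN; right.
have [fz|fzb] := eqVneq (f z) b; first by exists z.
have [//|[X Xapprox [Xz Xsub]]] := approx_ball_refine s0z fzb.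
exfalso; apply: (Nmax (N `|` [set X])).
  split=> [Y NY|sub]; first by left.
  by apply/Xz/(zN X); left; apply: sub; right.
split; first by move=> Y [/Napprox|->].
by apply: total_onU1 => // Y NY; left; apply: Xsub (Napprox _ NY) _; apply: zN; left.
Qed.

End BallImage.

Theorem mainTheorem2
  (A B : zmodType) (d1 d2 : Order.disp_t) (G1 : orderType d1) (G2 : orderType d2)
  (inf1 : G1) (inf2 : G2) (v : A -> G1) (w : B -> G2)
  (f : {additive A -> B}) (S : A -> Prop) :
  valued inf1 v -> valued inf2 w ->
  (forall s s', S s -> S s' -> v s = v s' -> w (f s) = w (f s')) ->
  (forall s s', S s -> S s' -> v s < v s' -> w (f s) < w (f s')) ->
  (forall a s, S s -> v s <= v a -> w (f s) <= w (f a)) ->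
  (forall b : B, b != 0%R -> exists s, S s /\ w b < w (b - f s)%R) ->
  spherically_complete v ->
  forall (a s : A), S s ->
    forall y : B,
      (exists x : A, ball v (v s) a x /\ f x = y) <-> ball w (w (f s)) (f a) y.
Proof.
move=> hv hw phi_eq phi_lt phi_ge approx hsc a s Ss y; split.
  by case=> x [ax <-]; apply: (image_ball_sub phi_ge Ss); exists x.
move=> fay; have [x [s_x fx]] :=
  exists_preimage_in_ball hv hw phi_eq phi_lt phi_ge approx Ss fay hsc.
exists (a - x); split; first by rewrite /ball opprB addrC subrK.
by rewrite raddfB fx opprB addrC subrK.
Qed.
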